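(* Let $\rho^{ab}$ be a state on $\mathcal H_a\otimes\mathcal H_b$ and $\{|i\rangle\}$ a fixed orthonormal basis of $\mathcal H_a$. Set $B_i=(\langle i|\otimes I_b)\sqrt{\rho^{ab}}(|i\rangle\otimes I_b)$. Then $$C^a_A(\rho^{ab})=1-\sum_i\mathrm{Tr}(B_i^2),$$ and a closest partial incoherent state is $\sigma=\sum_{i,j}q_{ij}|i\rangle\langle i|\otimes|\beta_{j|i}\rangle\langle\beta_{j|i}|$, where $\{|\beta_{j|i}\rangle\}_j$ is an orthonormal eigenbasis of $B_i$ and $q_{ij}=\langle i\otimes\beta_{j|i}|\sqrt{\rho^{ab}}|i\otimes\beta_{j|i}\rangle^2/\sum_{k,l}\langle k\otimes\beta_{l|k}|\sqrt{\rho^{ab}}|k\otimes\beta_{l|k}\rangle^2$.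
   Context: Partial incoherent states: $I^a_P=\{\sum_ip_i|i\rangle\langle i|\otimes\sigma_i\}$. Affinity partial coherence: $C^a_A(\rho^{ab})=\min_{\sigma\in I^a_P}\big(1-A^2(\rho^{ab},\sigma)\big)$ with $A(\rho,\sigma)=\mathrm{Tr}(\sqrt\rho\sqrt\sigma)$. *)

From HB Require Import structures.
From mathcomp Require Import all_boot all_order all_algebra all_field.
From mathcomp Require Import sesquilinear spectral.
Set Implicit Arguments. Unset Strict Implicit. Unset Printing Implicit Defensive.
Import Order.TTheory GRing.Theory Num.Theory.
Local Open Scope ring_scope.

Definition adjmx (k l : nat) (A : 'M[algC]_(k, l)) : 'M[algC]_(l, k) :=
  (map_mx Num.conj A)^T.

Definition psdmx (N : nat) (A : 'M[algC]_N) : Prop :=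
  adjmx A = A /\ forall v : 'cV[algC]_N, 0 <= (adjmx v *m A *m v) 0 0.

Definition is_state (N : nat) (rho : 'M[algC]_N) : Prop :=
  psdmx rho /\ \tr rho = 1.

(* Matrix square root via the spectral decomposition A = P^-1 diag(d) P
   (P unitary): sqrt A = P^-1 diag(sqrt d) P; for A psd this is the
   unique psd square root. *)
Definition sqrtmx (N : nat) (A : 'M[algC]_N) : 'M[algC]_N :=
  invmx (spectralmx A) *m diag_mx (map_mx sqrtC (spectral_diag A)) *m spectralmx A.

Definition affinity (N : nat) (rho sigma : 'M[algC]_N) : algC :=
  \tr (sqrtmx rho *m sqrtmx sigma).

(* Kronecker product A (x) B on H_a (x) H_b; the basis vector |i> (x) |j>
   has index mxvec_index i j. *)
Definition kron (m1 n1 m2 n2 : nat) (A : 'M[algC]_(m1, n1)) (B : 'M[algC]_(m2, n2))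
  : 'M[algC]_(m1 * m2, n1 * n2) :=
  \matrix_(k, l)
    (let: (i1, i2) := enum_val (cast_ord (esym (mxvec_cast m1 m2)) k) in
     let: (j1, j2) := enum_val (cast_ord (esym (mxvec_cast n1 n2)) l) in
     A i1 j1 * B i2 j2).

Definition partial_incoherent (m n : nat) (sigma : 'M[algC]_(m * n)) : Prop :=
  exists (p : 'I_m -> algC) (s : 'I_m -> 'M[algC]_n),
    [/\ forall i, 0 <= p i, \sum_i p i = 1, forall i, is_state (s i)
      & sigma = \sum_i p i *: kron (delta_mx i i) (s i)].

(* B_i = (<i| (x) I_b) sqrt(rho) (|i> (x) I_b), written entrywise:
   (B_i)_{jk} = <i j| sqrt rho |i k>. *)
Definition Bblock (m n : nat) (rho : 'M[algC]_(m * n)) (i : 'I_m) : 'M[algC]_n :=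
  \matrix_(j, k) sqrtmx rho (mxvec_index i j) (mxvec_index i k).

(* <i (x) beta_{j|i}| sqrt rho |i (x) beta_{j|i}> where beta_{j|i} is the
   j-th column of V i; equals beta^dagger B_i beta. *)
Definition diag_elt (m n : nat) (rho : 'M[algC]_(m * n)) (V : 'I_m -> 'M[algC]_n)
  (i : 'I_m) (j : 'I_n) : algC :=
  (adjmx (col j (V i)) *m Bblock rho i *m col j (V i)) 0 0.

Definition qcoef (m n : nat) (rho : 'M[algC]_(m * n)) (V : 'I_m -> 'M[algC]_n)
  (i : 'I_m) (j : 'I_n) : algC :=
  diag_elt rho V i j ^+ 2 / \sum_(k < m) \sum_(l < n) diag_elt rho V k l ^+ 2.

Definition closest_sigma (m n : nat) (rho : 'M[algC]_(m * n)) (V : 'I_m -> 'M[algC]_n)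
  : 'M[algC]_(m * n) :=
  \sum_(i < m) \sum_(j < n)
     qcoef rho V i j *: kron (delta_mx i i) (col j (V i) *m adjmx (col j (V i))).

From HB Require Import structures.
From mathcomp Require Import all_boot all_order all_algebra all_field.
From mathcomp Require Import sesquilinear spectral.
Import Order.TTheory GRing.Theory Num.Theory.
Local Open Scope ring_scope.
Set Implicit Arguments. Unset Strict Implicit. Unset Printing Implicit Defensive.

(* Since sigma is block diagonal with respect to {|i>}, so is sqrt sigma, and
   therefore A(rho, sigma) = tr (P sqrt sigma), where P = sum_i |i><i| (x) B_i
   is the pinching of sqrt rho. As tr (sqrt sigma)^2 = tr sigma = 1, the
   Cauchy-Schwarz inequality gives A^2 <= tr P^2 = sum_i tr B_i^2, with
   equality when sqrt sigma is proportional to P, i.e. for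
   sigma = P^2 / sum_i tr B_i^2 = sum_i |i><i| (x) B_i^2 / sum_k tr B_k^2.
   Expanding B_i^2 in an orthonormal eigenbasis of B_i turns this into the
   explicit closest state of the statement. *)


Lemma adjmxE k l (A : 'M[algC]_(k, l)) i j : adjmx A i j = (A j i)^*.
Proof. by rewrite !mxE. Qed.

Lemma adjmxK k l (A : 'M[algC]_(k, l)) : adjmx (adjmx A) = A.
Proof. by apply/matrixP=> i j; rewrite !adjmxE conjCK. Qed.

Lemma adjmxM k l p (A : 'M[algC]_(k, l)) (C : 'M[algC]_(l, p)) :
  adjmx (A *m C) = adjmx C *m adjmx A.
Proof. by rewrite /adjmx map_mxM trmx_mul. Qed.

Lemma adjmxD k l (A B : 'M[algC]_(k, l)) : adjmx (A + B) = adjmx A + adjmx B.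
Proof. by rewrite /adjmx map_mxD linearD. Qed.

Lemma adjmxZ k l a (A : 'M[algC]_(k, l)) : adjmx (a *: A) = a^* *: adjmx A.
Proof. by apply/matrixP=> i j; rewrite !mxE rmorphM. Qed.

Lemma adjmxB k l (A B : 'M[algC]_(k, l)) : adjmx (A - B) = adjmx A - adjmx B.
Proof. by rewrite adjmxD -scaleN1r adjmxZ rmorphN1 scaleN1r. Qed.

Lemma adjmx_delta k l (i : 'I_k) (j : 'I_l) : adjmx (delta_mx i j) = delta_mx j i.
Proof. by rewrite /adjmx map_delta_mx trmx_delta. Qed.

Lemma mxtrace_mul_adj k l (A : 'M[algC]_(k, l)) :
  \tr (A *m adjmx A) = \sum_i \sum_j `|A i j| ^+ 2.
Proof.
apply: eq_bigr => i _; rewrite mxE.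
by apply: eq_bigr => j _; rewrite adjmxE normCK.
Qed.

Lemma mxtrace_mul_adj_ge0 k l (A : 'M[algC]_(k, l)) : 0 <= \tr (A *m adjmx A).
Proof. by rewrite mxtrace_mul_adj; do 2!apply: sumr_ge0 => ? _; rewrite exprn_ge0. Qed.

Lemma mxtrace_mul_adj_eq0 k l (A : 'M[algC]_(k, l)) :
  \tr (A *m adjmx A) = 0 -> A = 0.
Proof.
rewrite mxtrace_mul_adj => /eqP; rewrite psumr_eq0 => [/allP A0|i _]; last first.
  by apply: sumr_ge0 => j _; rewrite exprn_ge0.
apply/matrixP=> i j; move/(_ i (mem_index_enum _)): A0.
rewrite /= psumr_eq0 => [/allP/(_ j (mem_index_enum _))|*]; last by rewrite exprn_ge0.
by rewrite /= expf_eq0 normr_eq0 mxE => /eqP.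
Qed.

Lemma herm_mxtrace_sq_eq0 k (U : 'M[algC]_k) :
  adjmx U = U -> \tr (U *m U) = 0 -> U = 0.
Proof. by move=> hU; rewrite -{2}hU; apply: mxtrace_mul_adj_eq0. Qed.

Lemma unitarymx_mul_adj k (U : 'M[algC]_k) : U \is unitarymx -> U *m adjmx U = 1%:M.
Proof. by move/unitarymxP; rewrite /adjmx map_trmx. Qed.

Lemma unitarymx_adj_mul k (U : 'M[algC]_k) : U \is unitarymx -> adjmx U *m U = 1%:M.
Proof. by move/unitarymx_mul_adj/mulmx1C. Qed.

Lemma invmx_unitary_adj k (U : 'M[algC]_k) : U \is unitarymx -> invmx U = adjmx U.
Proof. by move/invmx_unitary; rewrite /adjmx map_trmx. Qed.

Section UnitaryConjugation.
Variables (n : nat) (U : 'M[algC]_n).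
Hypothesis unitaryU : U \is unitarymx.

Lemma unitary_conjM P Q :
  adjmx U *m P *m U *m (adjmx U *m Q *m U) = adjmx U *m (P *m Q) *m U.
Proof.
by rewrite !mulmxA -(mulmxA _ U) unitarymx_mul_adj // mulmx1 -(mulmxA _ P).
Qed.

Lemma unitary_conjK P : U *m (adjmx U *m P *m U) *m adjmx U = P.
Proof.
by rewrite !mulmxA unitarymx_mul_adj // mul1mx -mulmxA unitarymx_mul_adj ?mulmx1.
Qed.

Lemma unitary_conjVK P : adjmx U *m (U *m P *m adjmx U) *m U = P.
Proof.
by rewrite !mulmxA unitarymx_adj_mul // mul1mx -mulmxA unitarymx_adj_mul ?mulmx1.
Qed.

Lemma unitary_conj_inj P Q :
  adjmx U *m P *m U = adjmx U *m Q *m U -> P = Q.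
Proof. by move=> PQ; rewrite -[P]unitary_conjK -[Q]unitary_conjK PQ. Qed.

End UnitaryConjugation.

Lemma spectral_decomp n (A : 'M[algC]_n) : adjmx A = A ->
  A = adjmx (spectralmx A) *m diag_mx (spectral_diag A) *m spectralmx A.
Proof.
move=> hA; have /orthomx_spectralP {1}-> : A \is normalmx.
  by apply/normalmxP; rewrite -map_trmx -/(adjmx A) hA.
by rewrite invmx_unitary_adj // spectral_unitarymx.
Qed.

Lemma diag_mx_comm_map (R : idomainType) n (Y : 'M[R]_n) (d : 'rV[R]_n)
    (f : R -> R) :
  Y *m diag_mx d = diag_mx d *m Y ->
  Y *m diag_mx (map_mx f d) = diag_mx (map_mx f d) *m Y.
Proof.
move=> /matrixP Yd; apply/matrixP=> i j; have := Yd i j.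
rewrite !mul_mx_diag !mul_diag_mx !mxE.
have [->|Yij] := eqVneq (Y i j) 0; first by rewrite !mul0r !mulr0.
by rewrite mulrC => /(mulIf Yij) ->; rewrite mulrC.
Qed.

(** * Positive semidefinite matrices and their square roots *)

Lemma psdmx_herm n (A : 'M[algC]_n) : psdmx A -> adjmx A = A.
Proof. by case. Qed.

Lemma psdmx_form n (A : 'M[algC]_n) (v : 'cV[algC]_n) :
  psdmx A -> 0 <= (adjmx v *m A *m v) 0 0.
Proof. by case=> _; apply. Qed.

Lemma psdmx_entry_ge0 n (A : 'M[algC]_n) i : psdmx A -> 0 <= A i i.
Proof.
by move/(psdmx_form (delta_mx i 0)); rewrite adjmx_delta -rowE -colE !mxE.
Qed.

Lemma psdmx_tr_ge0 n (A : 'M[algC]_n) : psdmx A -> 0 <= \tr A.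
Proof. by move=> hA; apply: sumr_ge0 => i _; apply: psdmx_entry_ge0. Qed.

Lemma psdmx_conj k l (A : 'M[algC]_k) (X : 'M[algC]_(k, l)) :
  psdmx A -> psdmx (adjmx X *m A *m X).
Proof.
move=> hA; split; first by rewrite !adjmxM adjmxK psdmx_herm // mulmxA.
by move=> v; have := psdmx_form (X *m v) hA; rewrite adjmxM !mulmxA.
Qed.

Lemma psdmx_diag n (d : 'rV[algC]_n) : (forall i, 0 <= d 0 i) -> psdmx (diag_mx d).
Proof.
move=> d_ge0; split.
  apply/matrixP=> i j; rewrite adjmxE !mxE eq_sym.
  by case: eqP => [->|_]; rewrite ?mulr1n ?mulr0n ?geC0_conj ?rmorph0.
move=> v; rewrite mul_mx_diag !mxE; apply: sumr_ge0 => i _.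
by rewrite !mxE mulrAC mulr_ge0 // mulrC mul_conjC_ge0.
Qed.

Lemma psdmx1 n : psdmx (1%:M : 'M[algC]_n).
Proof. by rewrite -diag_const_mx; apply: psdmx_diag => i; rewrite mxE ler01. Qed.

Lemma psdmxD n (A B : 'M[algC]_n) : psdmx A -> psdmx B -> psdmx (A + B).
Proof.
move=> hA hB; split; first by rewrite adjmxD !psdmx_herm.
by move=> v; rewrite mulmxDr mulmxDl mxE addr_ge0 // psdmx_form.
Qed.

Lemma psdmxZ n a (A : 'M[algC]_n) : 0 <= a -> psdmx A -> psdmx (a *: A).
Proof.
move=> a_ge0 hA; split; first by rewrite adjmxZ geC0_conj // psdmx_herm.
by move=> v; rewrite -scalemxAr -scalemxAl mxE mulr_ge0 // psdmx_form.
Qed.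

Lemma psdmx_sum n (I : finType) (F : I -> 'M[algC]_n) :
  (forall i, psdmx (F i)) -> psdmx (\sum_i F i).
Proof.
move=> hF; elim/big_ind: _ => //; last exact: psdmxD.
by rewrite -(scale0r 1%:M); apply/psdmxZ/psdmx1.
Qed.

Lemma spectral_diag_ge0 n (A : 'M[algC]_n) i : psdmx A -> 0 <= spectral_diag A 0 i.
Proof.
move=> hA; have U := spectral_unitarymx A.
have := psdmx_entry_ge0 i (psdmx_conj (adjmx (spectralmx A)) hA).
rewrite adjmxK {2}(spectral_decomp (psdmx_herm hA)) !mulmxA unitarymx_mul_adj //.
by rewrite mul1mx -mulmxA unitarymx_mul_adj // mulmx1 mxE eqxx mulr1n.
Qed.

Lemma sqrtmxE n (A : 'M[algC]_n) : sqrtmx A =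
  adjmx (spectralmx A) *m diag_mx (map_mx sqrtC (spectral_diag A)) *m spectralmx A.
Proof. by rewrite /sqrtmx invmx_unitary_adj // spectral_unitarymx. Qed.

Lemma sqrtmx_psd n (A : 'M[algC]_n) : psdmx A -> psdmx (sqrtmx A).
Proof.
move=> hA; rewrite sqrtmxE; apply/psdmx_conj/psdmx_diag => i.
by rewrite mxE sqrtC_ge0 spectral_diag_ge0.
Qed.

Lemma sqrtmxK n (A : 'M[algC]_n) : psdmx A -> sqrtmx A *m sqrtmx A = A.
Proof.
move=> hA; rewrite sqrtmxE unitary_conjM ?spectral_unitarymx // mulmx_diag.
rewrite [RHS](spectral_decomp (psdmx_herm hA)); congr (_ *m diag_mx _ *m _).
by apply/rowP=> i; rewrite !mxE -expr2 sqrtCK.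
Qed.

Lemma sqrtmx_comm n (A X : 'M[algC]_n) : adjmx A = A ->
  X *m A = A *m X -> X *m sqrtmx A = sqrtmx A *m X.
Proof.
move=> hA XA; set U := spectralmx A.
have hU : U \is unitarymx by apply: spectral_unitarymx.
set Y := U *m X *m adjmx U.
have XE : X = adjmx U *m Y *m U by rewrite /Y unitary_conjVK.
clearbody Y.
have YD : Y *m diag_mx (spectral_diag A) = diag_mx (spectral_diag A) *m Y.
  apply: (unitary_conj_inj hU); rewrite -!unitary_conjM //.
  by rewrite -(spectral_decomp hA) -XE.
by rewrite sqrtmxE -/U XE !unitary_conjM // diag_mx_comm_map.
Qed.

Lemma mxtrace_psd_mul_ge0 n (A B : 'M[algC]_n) :
  psdmx A -> psdmx B -> 0 <= \tr (A *m B).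
Proof.
move=> hA hB; rewrite -(sqrtmxK hA).
move: (sqrtmx A) (psdmx_herm (sqrtmx_psd hA)) => S hS.
rewrite -mulmxA mxtrace_mulC -{1}hS.
by apply: psdmx_tr_ge0; apply: psdmx_conj.
Qed.

Lemma psdmx_mul_eq0 n (S W : 'M[algC]_n) : psdmx S -> adjmx W = W ->
  \tr (W *m S *m W) = 0 -> S *m W = 0.
Proof.
move=> hS hW; rewrite -(sqrtmxK hS).
move: (sqrtmx S) (psdmx_herm (sqrtmx_psd hS)) => Q hQ.
have -> : W *m (Q *m Q) *m W = adjmx (Q *m W) *m (Q *m W).
  by rewrite adjmxM hW hQ !mulmxA.
rewrite mxtrace_mulC => /mxtrace_mul_adj_eq0 QW0.
by rewrite -mulmxA QW0 mulmx0.
Qed.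

Lemma psdmx_tr_eq0 n (A : 'M[algC]_n) : psdmx A -> \tr A = 0 -> A = 0.
Proof.
move=> hA trA; have hS := psdmx_herm (sqrtmx_psd hA).
have S0 : sqrtmx A = 0 by apply: herm_mxtrace_sq_eq0; rewrite ?sqrtmxK.
by rewrite -(sqrtmxK hA) S0 mul0mx.
Qed.

Lemma psdmx_sq n (A : 'M[algC]_n) : adjmx A = A -> psdmx (A *m A).
Proof. by move=> hA; have := psdmx_conj A (psdmx1 n); rewrite mulmx1 hA. Qed.

(* With [W := Y - S] and [Y S = S Y] we get [W (Y + S) = 0], so the nonnegative
   traces of [W Y W] and [W S W] vanish; hence [Y W = S W = 0] and [W ^+ 2 = 0]. *)
Lemma sqrtmx_unique n (A Y : 'M[algC]_n) :
  psdmx A -> psdmx Y -> Y *m Y = A -> sqrtmx A = Y.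
Proof.
move=> hA hY YY; set S := sqrtmx A; have hS := sqrtmx_psd hA.
have YS : Y *m S = S *m Y by apply: sqrtmx_comm; rewrite ?psdmx_herm // -YY mulmxA.
set W := Y - S; have hW : adjmx W = W by rewrite adjmxB !psdmx_herm.
have trWPW_ge0 P : psdmx P -> 0 <= \tr (W *m P *m W).
  by move=> hP; rewrite -{1}hW; apply: psdmx_tr_ge0; apply: psdmx_conj.
have WYS : W *m (Y + S) = 0.
  by rewrite /W mulmxBl !mulmxDr YY sqrtmxK // YS [S *m Y + A]addrC subrr.
have /eqP : \tr (W *m Y *m W) + \tr (W *m S *m W) = 0.
  by rewrite -mxtraceD -mulmxDl -mulmxDr WYS mul0mx mxtrace0.
rewrite paddr_eq0 ?trWPW_ge0 // => /andP[/eqP trWYW /eqP trWSW].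
have WW : W *m W = 0.
  by rewrite {1}/W mulmxBl (psdmx_mul_eq0 hY hW) ?(psdmx_mul_eq0 hS hW) ?subrr.
have W0 : W = 0 by apply: herm_mxtrace_sq_eq0; rewrite // WW mxtrace0.
by apply/eqP; rewrite eq_sym -subr_eq0 -/W W0.
Qed.

(** * Block structure of matrices on [H_a (x) H_b] *)

Section Blocks.
Variables m n : nat.
Local Notation idx := (@mxvec_index m n).

Definition unmxvec_index (x : 'I_(m * n)) : 'I_m * 'I_n :=
  enum_val (cast_ord (esym (mxvec_cast m n)) x).

Lemma mxvec_indexK i j : unmxvec_index (idx i j) = (i, j).
Proof. by rewrite /unmxvec_index /mxvec_index cast_ordK enum_rankK. Qed.

Lemma eq_mxvec_index i j k l : (idx i j == idx k l) = (i == k) && (j == l).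
Proof.
apply/eqP/andP => [E|[/eqP-> /eqP->]] //.
by have := congr1 unmxvec_index E; rewrite !mxvec_indexK => -[-> ->].
Qed.

Lemma sum_mxvec_index (F : 'I_(m * n) -> algC) :
  \sum_x F x = \sum_i \sum_j F (idx i j).
Proof.
rewrite pair_big /= (reindex (fun p : 'I_m * 'I_n => idx p.1 p.2)) //.
exists unmxvec_index => [[i j] _|x _]; first by rewrite mxvec_indexK.
by case/mxvec_indexP: x => i j; rewrite mxvec_indexK.
Qed.

Lemma mxvec_index_matrixP (X Y : 'M[algC]_(m * n)) :
  (forall a b c d, X (idx a b) (idx c d) = Y (idx a b) (idx c d)) -> X = Y.
Proof.
by move=> XY; apply/matrixP=> x y; case/mxvec_indexP: x => a b; case/mxvec_indexP: y.
Qed.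

Lemma kronE (A : 'M[algC]_m) (B : 'M[algC]_n) a b c d :
  kron A B (idx a b) (idx c d) = A a c * B b d.
Proof. by rewrite mxE -!/(unmxvec_index _) !mxvec_indexK. Qed.

Lemma kronZr (A : 'M[algC]_m) c (B : 'M[algC]_n) : kron A (c *: B) = c *: kron A B.
Proof.
by apply: mxvec_index_matrixP => a b c' d; rewrite [RHS]mxE !kronE mxE mulrCA.
Qed.

Lemma kron_sumr (A : 'M[algC]_m) (I : finType) (B : I -> 'M[algC]_n) :
  kron A (\sum_j B j) = \sum_j kron A (B j).
Proof.
apply: mxvec_index_matrixP => a b c d; rewrite kronE !summxE mulr_sumr.
by apply: eq_bigr => j _; rewrite kronE.
Qed.

Lemma kron_delta_sumE (M : 'I_m -> 'M[algC]_n) a b c d :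
  (\sum_i kron (delta_mx i i) (M i)) (idx a b) (idx c d) = (a == c)%:R * M a b d.
Proof.
rewrite summxE (bigD1 a) //= big1 ?addr0 => [|i ia]; rewrite kronE mxE.
  by rewrite eqxx eq_sym; case: (a == c); rewrite ?mul1r ?mul0r.
by rewrite eq_sym (negPf ia) mul0r.
Qed.

Lemma mxtrace_kron_delta_sum (M : 'I_m -> 'M[algC]_n) :
  \tr (\sum_i kron (delta_mx i i) (M i)) = \sum_i \tr (M i).
Proof.
rewrite /mxtrace sum_mxvec_index; apply: eq_bigr => i _.
by apply: eq_bigr => j _; rewrite kron_delta_sumE eqxx mul1r.
Qed.

Definition blockdiagmx (X : 'M[algC]_(m * n)) :=
  forall a b c d, a != c -> X (idx a b) (idx c d) = 0.

Lemma kron_delta_sum_blockdiag (M : 'I_m -> 'M[algC]_n) :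
  blockdiagmx (\sum_i kron (delta_mx i i) (M i)).
Proof. by move=> a b c d ac; rewrite kron_delta_sumE (negPf ac) mul0r. Qed.

Definition block_proj (i : 'I_m) : 'M[algC]_(m * n) :=
  diag_mx (\row_x ((unmxvec_index x).1 == i)%:R).

Lemma blockdiagmx_comm X :
  blockdiagmx X <-> forall i, block_proj i *m X = X *m block_proj i.
Proof.
split=> [bX i|PX a b c d ac].
  apply: mxvec_index_matrixP => a b c d.
  rewrite mul_diag_mx mul_mx_diag !mxE !mxvec_indexK /=.
  have [->|ac] := eqVneq a c; first by rewrite mulrC.
  by rewrite bX // mulr0 mul0r.
move/matrixP: (PX a) => /(_ (idx a b) (idx c d)).
rewrite mul_diag_mx mul_mx_diag !mxE !mxvec_indexK /= eqxx mul1r.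
by rewrite eq_sym (negPf ac) mulr0.
Qed.

Lemma sqrtmx_blockdiag X : psdmx X -> blockdiagmx X -> blockdiagmx (sqrtmx X).
Proof.
move=> hX /blockdiagmx_comm PX; apply/blockdiagmx_comm => i.
exact/sqrtmx_comm/PX/psdmx_herm.
Qed.

Definition block_emb (i : 'I_m) : 'M[algC]_(n, m * n) :=
  \matrix_(j, x) (x == idx i j)%:R.

Lemma block_embM i k (M : 'M[algC]_(m * n, k)) j y :
  (block_emb i *m M) j y = M (idx i j) y.
Proof.
rewrite mxE (bigD1 (idx i j)) //= big1 ?addr0 => [|x xi]; rewrite mxE.
  by rewrite eqxx mul1r.
by rewrite (negPf xi) mul0r.
Qed.

Lemma mul_adj_block_emb i k (M : 'M[algC]_(k, m * n)) x l :
  (M *m adjmx (block_emb i)) x l = M x (idx i l).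
Proof.
by rewrite -[LHS]conjCK -adjmxE adjmxM adjmxK block_embM adjmxE conjCK.
Qed.

Lemma adj_block_embM i k (M : 'M[algC]_(n, k)) a b l :
  (adjmx (block_emb i) *m M) (idx a b) l = (a == i)%:R * M b l.
Proof.
have [->|ai] := eqVneq a i.
  rewrite mxE (bigD1 b) //= big1 ?addr0 => [|j jb]; rewrite adjmxE mxE.
    by rewrite eqxx rmorph1.
  by rewrite eq_mxvec_index eqxx /= eq_sym (negPf jb) rmorph0 mul0r.
rewrite mxE big1 ?mul0r // => j _.
by rewrite adjmxE mxE eq_mxvec_index (negPf ai) rmorph0 mul0r.
Qed.

Lemma mul_block_emb i k (M : 'M[algC]_(k, n)) x c d :
  (M *m block_emb i) x (idx c d) = (c == i)%:R * M x d.
Proof.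
rewrite -[LHS]conjCK -adjmxE adjmxM adj_block_embM rmorphM /= adjmxE conjCK.
by case: (c == i); rewrite ?rmorph1 ?rmorph0.
Qed.

Lemma kron_delta_emb (i : 'I_m) (M : 'M[algC]_n) :
  kron (delta_mx i i) M = adjmx (block_emb i) *m M *m block_emb i.
Proof.
apply: mxvec_index_matrixP => a b c d; rewrite kronE mul_block_emb adj_block_embM mxE.
by case: (a == i); case: (c == i); rewrite ?mul1r ?mul0r ?mulr0.
Qed.

Lemma block_emb_mul_adj i j :
  block_emb i *m adjmx (block_emb j) = (i == j)%:R *: 1%:M.
Proof.
apply/matrixP=> k l; rewrite mul_adj_block_emb !mxE eq_mxvec_index (eq_sym j) (eq_sym l).
by case: (i == j); case: (k == l); rewrite ?mulr1 ?mulr0.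
Qed.

Lemma kron_delta_sum_mul (M N : 'I_m -> 'M[algC]_n) :
  (\sum_i kron (delta_mx i i) (M i)) *m (\sum_i kron (delta_mx i i) (N i)) =
  \sum_i kron (delta_mx i i) (M i *m N i).
Proof.
rewrite mulmx_suml; apply: eq_bigr => i _.
rewrite mulmx_sumr (bigD1 i) //= big1 ?addr0 => [|j ji]; rewrite !kron_delta_emb !mulmxA.
  by rewrite -(mulmxA _ (block_emb i)) block_emb_mul_adj eqxx scale1r mulmx1.
rewrite -(mulmxA _ (block_emb i)) block_emb_mul_adj eq_sym (negPf ji).
by rewrite scale0r mulmx0 !mul0mx.
Qed.

Lemma kron_delta_psd (i : 'I_m) (M : 'M[algC]_n) :
  psdmx M -> psdmx (kron (delta_mx i i) M).
Proof. by rewrite kron_delta_emb; apply: psdmx_conj. Qed.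

(* The pinching [sum_i (|i><i| (x) I_b) R (|i><i| (x) I_b)], written blockwise. *)
Definition pinchmx (R : 'M[algC]_(m * n)) : 'M[algC]_(m * n) :=
  \sum_i kron (delta_mx i i) (block_emb i *m R *m adjmx (block_emb i)).

Lemma pinchmxE R a b c d :
  pinchmx R (idx a b) (idx c d) = (a == c)%:R * R (idx a b) (idx c d).
Proof.
rewrite kron_delta_sumE mul_adj_block_emb block_embM.
by have [->|] := eqVneq a c; rewrite ?mul0r.
Qed.

Lemma pinchmx_psd R : psdmx R -> psdmx (pinchmx R).
Proof.
move=> hR; apply: psdmx_sum => i; apply: kron_delta_psd.
by rewrite -{1}(adjmxK (block_emb i)); apply: psdmx_conj.
Qed.

Lemma mxtrace_mul_pinchmx R X :
  blockdiagmx X -> \tr (R *m X) = \tr (pinchmx R *m X).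
Proof.
move=> bX; rewrite /mxtrace; apply: eq_bigr => x _; rewrite !mxE.
apply: eq_bigr => y _; case/mxvec_indexP: x => a b; case/mxvec_indexP: y => c d.
rewrite pinchmxE; have [->|ac] := eqVneq a c; first by rewrite mul1r.
by rewrite bX 1?eq_sym // !mulr0.
Qed.

End Blocks.

Arguments block_emb {m n} i.

Lemma state_dim_gt0 N (rho : 'M[algC]_N) : is_state rho -> (0 < N)%N.
Proof.
by case: N rho => // rho [_]; rewrite /mxtrace big_ord0 => /eqP; rewrite eq_sym oner_eq0.
Qed.

(* The zero matrix, which cannot be normalized, is sent to the maximally
   mixed state. *)
Definition normalized_state n (M : 'M[algC]_n) : 'M[algC]_n :=
  if \tr M == 0 then n%:R^-1 *: 1%:M else (\tr M)^-1 *: M.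

Lemma normalized_state_is_state n (M : 'M[algC]_n) :
  (0 < n)%N -> psdmx M -> is_state (normalized_state M).
Proof.
move=> n_gt0 hM; rewrite /normalized_state; case: eqP => [_|/eqP trM].
  split; last by rewrite mxtraceZ mxtrace1 mulVf // pnatr_eq0 -lt0n.
  by apply: psdmxZ (psdmx1 n); rewrite invr_ge0 ler0n.
by split; [apply: psdmxZ; rewrite ?invr_ge0 ?psdmx_tr_ge0 | rewrite mxtraceZ mulVf].
Qed.

Lemma normalized_stateK n (M : 'M[algC]_n) :
  psdmx M -> \tr M *: normalized_state M = M.
Proof.
move=> hM; rewrite /normalized_state; case: eqP => [trM|/eqP trM].
  by rewrite trM scale0r (psdmx_tr_eq0 hM trM).
by rewrite scalerA mulfV ?scale1r.
Qed.

(* Cauchy-Schwarz for the Hilbert-Schmidt inner product: expand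
   [0 <= tr (H *m adjmx H)] for [H := P - tr (P S) *: S]. *)
Lemma mxtrace_cauchy_schwarz n (P S : 'M[algC]_n) :
  adjmx P = P -> adjmx S = S -> 0 <= \tr (P *m S) -> \tr (S *m S) = 1 ->
  \tr (P *m S) ^+ 2 <= \tr (P *m P).
Proof.
move=> hP hS a_ge0 trSS; set a := \tr (P *m S).
have := mxtrace_mul_adj_ge0 (P - a *: S).
rewrite adjmxB adjmxZ geC0_conj // hP hS mulmxBl !mulmxBr -!scalemxAr -!scalemxAl.
rewrite !raddfB /= !mxtraceZ -/a [\tr (S *m P)]mxtrace_mulC -/a trSS.
by rewrite mulr1 subrr addr0 subr_ge0 -expr2.
Qed.

Lemma partial_incoherent_blockdiag_state m n (sigma : 'M[algC]_(m * n)) :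
  partial_incoherent sigma -> [/\ psdmx sigma, blockdiagmx sigma & \tr sigma = 1].
Proof.
case=> p [s [p_ge0 sum_p hs ->]].
have sigmaE : \sum_i p i *: kron (delta_mx i i) (s i) =
              \sum_i kron (delta_mx i i) (p i *: s i).
  by apply: eq_bigr => i _; rewrite kronZr.
rewrite sigmaE; split.
- by apply: psdmx_sum => i; apply/kron_delta_psd/psdmxZ/(hs i).1.
- exact: kron_delta_sum_blockdiag.
- rewrite mxtrace_kron_delta_sum -sum_p; apply: eq_bigr => i _.
  by rewrite mxtraceZ (hs i).2 mulr1.
Qed.

(** * The affinity of partial coherence *)

Section AffinityCoherence.
Variables m n : nat.
Variable rho : 'M[algC]_(m * n).
Local Notation R := (sqrtmx rho).
Local Notation B := (Bblock rho).
Local Notation T := (\sum_i \tr (Bblock rho i *m Bblock rho i)).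

Lemma Bblock_emb i : B i = block_emb i *m R *m adjmx (block_emb i).
Proof. by apply/matrixP=> j k; rewrite mul_adj_block_emb block_embM mxE. Qed.

Lemma pinchmx_sqrt : pinchmx R = \sum_i kron (delta_mx i i) (B i).
Proof. by apply: eq_bigr => i _; rewrite Bblock_emb. Qed.

Lemma mxtrace_pinchmx_sq : \tr (pinchmx R *m pinchmx R) = T.
Proof. by rewrite pinchmx_sqrt kron_delta_sum_mul mxtrace_kron_delta_sum. Qed.

Hypothesis state_rho : is_state rho.

Let psdR : psdmx R. Proof. exact: sqrtmx_psd state_rho.1. Qed.

Lemma Bblock_psd i : psdmx (B i).
Proof. by rewrite Bblock_emb -{1}(adjmxK (block_emb i)); apply: psdmx_conj. Qed.

Lemma affinity_ge0 sigma : partial_incoherent sigma -> 0 <= affinity rho sigma.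
Proof.
by case/partial_incoherent_blockdiag_state=> hs _ _; apply/mxtrace_psd_mul_ge0/sqrtmx_psd.
Qed.

(* Only the block-diagonal part of [sqrt rho] is seen by [sqrt sigma]. *)
Lemma affinity_sq_le sigma :
  partial_incoherent sigma -> affinity rho sigma ^+ 2 <= T.
Proof.
move=> pi_sigma; have [hs bs trs] := partial_incoherent_blockdiag_state pi_sigma.
have hS := sqrtmx_psd hs.
have AE : affinity rho sigma = \tr (pinchmx R *m sqrtmx sigma).
  exact/mxtrace_mul_pinchmx/sqrtmx_blockdiag.
rewrite -mxtrace_pinchmx_sq AE mxtrace_cauchy_schwarz ?psdmx_herm ?sqrtmxK //.
  exact/pinchmx_psd.
by rewrite -AE affinity_ge0.
Qed.

(* If all the [B i] vanished, [sqrt rho] would have zero diagonal, hence be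
   zero, and so would [rho]. *)
Lemma tr_Bblock_sq_sum_gt0 : 0 < T.
Proof.
have hP := psdmx_herm (pinchmx_psd psdR).
have T_ge0 : 0 <= T by rewrite -mxtrace_pinchmx_sq -{2}hP mxtrace_mul_adj_ge0.
rewrite lt0r T_ge0 andbT; apply/eqP.
rewrite -mxtrace_pinchmx_sq => /(herm_mxtrace_sq_eq0 hP) P0.
have trR : \tr R = 0.
  rewrite /mxtrace sum_mxvec_index big1 // => a _; rewrite big1 // => b _.
  by have := pinchmxE R a b a b; rewrite P0 eqxx mul1r mxE.
have := state_rho.2; rewrite -(sqrtmxK state_rho.1) (psdmx_tr_eq0 psdR trR).
by rewrite mul0mx mxtrace0 => /eqP; rewrite eq_sym oner_eq0.
Qed.

Definition optimal_state : 'M[algC]_(m * n) :=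
  \sum_i kron (delta_mx i i) (T^-1 *: (B i *m B i)).

Lemma optimal_state_partial_incoherent : partial_incoherent optimal_state.
Proof.
have T_neq0 : T != 0 by rewrite gt_eqF // tr_Bblock_sq_sum_gt0.
have psdBB i : psdmx (B i *m B i) by apply/psdmx_sq/psdmx_herm/Bblock_psd.
exists (fun i => \tr (B i *m B i) / T), (fun i => normalized_state (B i *m B i)).
split=> [i||i|].
- by apply: divr_ge0; [apply: psdmx_tr_ge0 | apply/ltW/tr_Bblock_sq_sum_gt0].
- by rewrite -mulr_suml mulfV.
- apply: normalized_state_is_state (psdBB i).
  by have := state_dim_gt0 state_rho; rewrite muln_gt0 => /andP[].
- apply: eq_bigr => i _.
  by rewrite [_ / T]mulrC -scalerA -kronZr normalized_stateK // kronZr.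
Qed.

Lemma sqrtmx_optimal_state : sqrtmx optimal_state = (sqrtC T)^-1 *: pinchmx R.
Proof.
have [hs _ _] := partial_incoherent_blockdiag_state optimal_state_partial_incoherent.
apply: sqrtmx_unique => //.
  apply: psdmxZ (pinchmx_psd psdR).
  by rewrite invr_ge0 sqrtC_ge0 ltW // tr_Bblock_sq_sum_gt0.
rewrite -scalemxAr -scalemxAl scalerA -expr2 exprVn sqrtCK.
rewrite pinchmx_sqrt kron_delta_sum_mul scaler_sumr.
by apply: eq_bigr => i _; rewrite kronZr.
Qed.

Lemma affinity_optimal_state : affinity rho optimal_state ^+ 2 = T.
Proof.
have [hs bs _] := partial_incoherent_blockdiag_state optimal_state_partial_incoherent.
rewrite /affinity (mxtrace_mul_pinchmx R (sqrtmx_blockdiag hs bs)).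
rewrite sqrtmx_optimal_state -scalemxAr mxtraceZ mxtrace_pinchmx_sq.
rewrite exprMn exprVn sqrtCK expr2 mulrA mulVf ?mul1r //.
by rewrite gt_eqF // tr_Bblock_sq_sum_gt0.
Qed.

End AffinityCoherence.

Section OrthonormalEigenbasis.
Variables (n : nat) (V A : 'M[algC]_n).
Hypothesis unitaryV : adjmx V *m V = 1%:M.

Lemma col_adj_mul_col j : (adjmx (col j V) *m col j V) 0 0 = 1.
Proof.
have := congr1 (fun M : 'M[algC]_n => M j j) unitaryV.
rewrite [in X in _ = X -> _]mxE eqxx /= => Vjj; rewrite -[RHS]Vjj.
by rewrite !mxE; apply: eq_bigr => k _; rewrite !mxE.
Qed.

Lemma sum_col_mul_adj : \sum_j col j V *m adjmx (col j V) = 1%:M.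
Proof.
rewrite -(mulmx1C unitaryV); apply/matrixP=> a b; rewrite summxE mxE.
by apply: eq_bigr => j _; rewrite !mxE big_ord1 !mxE.
Qed.

Lemma eigenvalueE j l : A *m col j V = l *: col j V ->
  l = (adjmx (col j V) *m A *m col j V) 0 0.
Proof. by move=> eig; rewrite -mulmxA eig -scalemxAr mxE col_adj_mul_col mulr1. Qed.

Variable lam : 'I_n -> algC.
Hypothesis eigA : forall j, A *m col j V = lam j *: col j V.

Lemma eigenbasis_sq_decomp :
  A *m A = \sum_j lam j ^+ 2 *: (col j V *m adjmx (col j V)).
Proof.
rewrite -[A *m A]mulmx1 -sum_col_mul_adj mulmx_sumr; apply: eq_bigr => j _.
by rewrite mulmxA -(mulmxA A) eigA -scalemxAr eigA scalerA -scalemxAl expr2.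
Qed.

Lemma mxtrace_eigenbasis_sq : \tr (A *m A) = \sum_j lam j ^+ 2.
Proof.
rewrite eigenbasis_sq_decomp raddf_sum /=; apply: eq_bigr => j _.
by rewrite mxtraceZ mxtrace_mulC /mxtrace big_ord1 col_adj_mul_col mulr1.
Qed.

End OrthonormalEigenbasis.

Lemma closest_sigmaE m n (rho : 'M[algC]_(m * n)) (V : 'I_m -> 'M[algC]_n) :
  (forall i, adjmx (V i) *m V i = 1%:M) ->
  (forall i j, exists lam : algC, Bblock rho i *m col j (V i) = lam *: col j (V i)) ->
  closest_sigma rho V = optimal_state rho.
Proof.
move=> unitaryV eigB.
have eig i j : Bblock rho i *m col j (V i) = diag_elt rho V i j *: col j (V i).
  by have [l eigl] := eigB i j; rewrite /diag_elt -(eigenvalueE (unitaryV i) eigl).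
have sumE : \sum_(k < m) \sum_(l < n) diag_elt rho V k l ^+ 2 =
            \sum_i \tr (Bblock rho i *m Bblock rho i).
  by apply: eq_bigr => i _; rewrite (mxtrace_eigenbasis_sq (unitaryV i) (eig i)).
apply: eq_bigr => i _.
rewrite (eigenbasis_sq_decomp (unitaryV i) (eig i)) scaler_sumr kron_sumr.
by apply: eq_bigr => j _; rewrite /qcoef sumE scalerA kronZr mulrC.
Qed.

Unset Implicit Arguments.

Theorem mainTheorem9 (m n : nat) (rho : 'M[algC]_(m * n)) :
  is_state rho ->
  let CA := 1 - \sum_(i < m) \tr (Bblock rho i *m Bblock rho i) in
  (forall sigma, partial_incoherent sigma -> CA <= 1 - affinity rho sigma ^+ 2) /\
  (exists sigma, partial_incoherent sigma /\ 1 - affinity rho sigma ^+ 2 = CA) /\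
  (forall V : 'I_m -> 'M[algC]_n,
     (forall i, adjmx (V i) *m V i = 1%:M) ->
     (forall i j, exists lam : algC,
        Bblock rho i *m col j (V i) = lam *: col j (V i)) ->
     partial_incoherent (closest_sigma rho V) /\
     1 - affinity rho (closest_sigma rho V) ^+ 2 = CA).
Proof.
move=> state_rho CA.
have optimal : partial_incoherent (optimal_state rho) /\
               1 - affinity rho (optimal_state rho) ^+ 2 = CA.
  by split; [exact: optimal_state_partial_incoherent | rewrite affinity_optimal_state].
split; [|split].
- by move=> sigma /(affinity_sq_le state_rho); rewrite lerD2l lerN2.
- by exists (optimal_state rho).
- by move=> V unitaryV eigB; rewrite closest_sigmaE.
Qed.
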